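(* Let $\mathcal{H}$ be a real Hilbert space, let $A:\mathcal{H}\rightrightarrows\mathcal{H}$ be maximal monotone with $A^{-1}(0)\neq\emptyset$, let $\theta>0$, let $p\geq1$ be an integer, and let $(x,\lambda):[0,+\infty)\to\mathcal{H}\times(0,+\infty)$ be a global solution of \[ \dot{x}(t)+x(t)-(I+\lambda(t)A)^{-1}x(t)=0,\qquad \lambda(t)\,\|(I+\lambda(t)A)^{-1}x(t)-x(t)\|^{p-1}=\theta, \] with $x(0)\in\{x\in\mathcal{H}:0\notin Ax\}$. Assume the error bound condition: there exist $\delta>0$ and $\kappa>0$ such that for all $x\in\mathcal{H}$, $\textsc{dist}(0,Ax)\leq\delta$ implies $\textsc{dist}(x,A^{-1}(0))\leq\kappa\,\textsc{dist}(0,Ax)$. Then there exist a sufficiently large $t_0>0$ and a constant $c>0$ with $c\leq 2\left(1+\frac{\kappa}{\lambda(0)}\right)^{-2}$ such that $\textsc{dist}(x(t),A^{-1}(0))=O(e^{-ct/2})$ for all $t>t_0$.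
   Context: $\textsc{dist}(x,S)=\inf_{z\in S}\|x-z\|$; $A^{-1}(0)=\{x:0\in Ax\}$; $(I+\lambda A)^{-1}$ is the resolvent of $A$ of index $\lambda$. *)

From HB Require Import structures.
From mathcomp Require Import all_boot all_order all_algebra.
From mathcomp Require Import all_classical all_reals all_analysis.
Set Implicit Arguments. Unset Strict Implicit. Unset Printing Implicit Defensive.
Import Order.TTheory GRing.Theory Num.Theory.
Import numFieldNormedType.Exports.
Local Open Scope classical_set_scope.
Local Open Scope ring_scope.

Section Defs.
Context {R : realType} {H : normedModType R}.

Definition inner_product (ip : H -> H -> R) : Prop :=
  [/\ forall x y, ip x y = ip y x,
      forall (a : R) x y z, ip (a *: x + y) z = a * ip x z + ip y z
    & forall x, ip x x = `|x| ^+ 2].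

(* set-valued operators A : H ⇉ H, u ∈ A x written A x u *)
Definition monotone_op (ip : H -> H -> R) (A : H -> set H) : Prop :=
  forall x y u v, A x u -> A y v -> 0 <= ip (u - v) (x - y).

Definition maximal_monotone (ip : H -> H -> R) (A : H -> set H) : Prop :=
  monotone_op ip A /\
  forall B : H -> set H, monotone_op ip B -> (forall x, A x `<=` B x) -> B = A.

Definition zeros (A : H -> set H) : set H := [set x | A x 0].

(* resolvent (I + lam A)^{-1} x : the y with x ∈ y + lam A y *)
Definition resolvent (A : H -> set H) (lam : R) (x : H) : H :=
  xget x [set y | A y (lam^-1 *: (x - y))].

Definition dist (x : H) (S : set H) : R := inf [set `|x - z| | z in S].

End Defs.

(* Write J = (I + lam A)^-1 x and r = |J - x| along the trajectory, so that x' = J - x.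
   As (x - J) / lam lies in A J and 0 in A z for every zero z, monotonicity gives
   <x', x - z> <= - r^2: the squared distance of x to A^-1(0) decreases at rate at
   least 2 r^2.  The coupling lam r^(p-1) = theta makes |(x - J) / lam| = r^p / theta,
   so when r^p <= theta delta the error bound at J yields dist(x, A^-1(0)) <= K r, and
   when r is large the nonincreasing distance is also a bounded multiple of r.  Hence
   dist^2 <= K' r^2 for t >= 1, dist^2 shrinks by the factor 1 + 2/K' over every unit
   time interval, and the decay is exponential.

   The resolvent is well defined by Minty's theorem.  Its core is that a nonempty
   monotone graph G has a point (x, -x) monotonically related to it: maximise
   -|Y - V|^2/4 - c, which is <= 0, over the formal convex combinations (Y, V, c) of
   triples (y, v, <y, v>) with (y, v) in G; by the parallelogram law the Y - V of a
   maximising sequence form a Cauchy sequence, and x is half of its limit.  For the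
   graph of lam A - w this makes (x, (w - x) / lam) monotonically related to A, hence
   on its graph by maximality. *)

From HB Require Import structures.
From mathcomp Require Import all_boot all_order all_algebra.
From mathcomp Require Import all_classical all_reals all_analysis.
From mathcomp Require Import lra ring.
Set Implicit Arguments. Unset Strict Implicit. Unset Printing Implicit Defensive.
Import Order.TTheory GRing.Theory Num.Theory.
Import numFieldNormedType.Exports.
Local Open Scope classical_set_scope.
Local Open Scope ring_scope.

Section InnerProduct.
Context {R : realType} {H : normedModType R} {ip : H -> H -> R}.
Hypothesis hip : inner_product ip.

Lemma ipC x y : ip x y = ip y x. Proof. by case: hip. Qed.
Lemma ipxx x : ip x x = `|x| ^+ 2. Proof. by case: hip. Qed.
Lemma ipZDl a x y z : ip (a *: x + y) z = a * ip x z + ip y z. Proof. by case: hip. Qed.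

Lemma ip0l z : ip 0 z = 0.
Proof. by have := ipZDl 1 0 0 z; rewrite scaler0 addr0 mul1r; lra. Qed.

Lemma ipDl x y z : ip (x + y) z = ip x z + ip y z.
Proof. by have := ipZDl 1 x y z; rewrite scale1r mul1r. Qed.

Lemma ipZl a x z : ip (a *: x) z = a * ip x z.
Proof. by rewrite -(addr0 (a *: x)) ipZDl ip0l addr0. Qed.

Lemma ipNl x z : ip (- x) z = - ip x z.
Proof. by rewrite -scaleN1r ipZl mulN1r. Qed.

Lemma ipBl x y z : ip (x - y) z = ip x z - ip y z.
Proof. by rewrite ipDl ipNl. Qed.

Lemma ipDr x y z : ip z (x + y) = ip z x + ip z y.
Proof. by rewrite ipC ipDl !(ipC z). Qed.

Lemma ipZr a x z : ip z (a *: x) = a * ip z x.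
Proof. by rewrite ipC ipZl ipC. Qed.

Lemma ipNr x z : ip z (- x) = - ip z x.
Proof. by rewrite ipC ipNl ipC. Qed.

Lemma ipBr x y z : ip z (x - y) = ip z x - ip z y.
Proof. by rewrite ipDr ipNr. Qed.

Lemma ip_polarization x y : ip x y = (`|x + y| ^+ 2 - `|x - y| ^+ 2) / 4.
Proof. by rewrite -!ipxx ipDl ipBl !ipDr !ipNr (ipC y x); lra. Qed.

Lemma ip_cvg {T : Type} {F : set_system T} {FF : Filter F} (a b : T -> H) a0 b0 :
  a @ F --> a0 -> b @ F --> b0 -> (fun t => ip (a t) (b t)) @ F --> ip a0 b0.
Proof.
move=> ca cb; rewrite ip_polarization !expr2.
under eq_fun do rewrite ip_polarization !expr2.
by apply: cvgMl; apply: cvgB; apply: cvgM; apply: cvg_norm;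
  [exact: cvgD | exact: cvgD | exact: cvgB | exact: cvgB].
Qed.

End InnerProduct.

Section MonotoneHull.
Context {R : realType} {H : normedModType R} {ip : H -> H -> R}.
Hypothesis hip : inner_product ip.
Variable G : H -> H -> Prop.
Hypothesis Gmono : forall y v y' v', G y v -> G y' v' -> 0 <= ip (v - v') (y - y').

Inductive mono_hull : H -> H -> R -> Prop :=
| mono_hull_graph y v : G y v -> mono_hull y v (ip y v)
| mono_hull_mix (t : R) Y1 V1 c1 Y2 V2 c2 : 0 <= t -> t <= 1 ->
    mono_hull Y1 V1 c1 -> mono_hull Y2 V2 c2 ->
    mono_hull ((1 - t) *: Y1 + t *: Y2) ((1 - t) *: V1 + t *: V2)
              ((1 - t) * c1 + t * c2).

Lemma mono_hull_graph_pair_le y v Y V c :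
  G y v -> mono_hull Y V c -> ip y V + ip Y v <= ip y v + c.
Proof.
move=> Gyv; elim=> {Y V c} [y' v' Gy'v'|t Y1 V1 c1 Y2 V2 c2 t0 t1 _ IH1 _ IH2].
  have := Gmono Gyv Gy'v'.
  rewrite (ipBl hip) !(ipBr hip) (ipC hip v y) (ipC hip v y') (ipC hip v' y) (ipC hip v' y').
  lra.
rewrite (ipDr hip) !(ipZr hip) (ipDl hip) !(ipZl hip).
have t1' : 0 <= 1 - t by rewrite subr_ge0.
have := ler_wpM2l t1' IH1; have := ler_wpM2l t0 IH2; rewrite !mulrDr; lra.
Qed.

Lemma mono_hull_pair_le Y V c Y' V' c' :
  mono_hull Y V c -> mono_hull Y' V' c' -> ip Y V' + ip Y' V <= c + c'.
Proof.
move=> h h'; elim: h => {Y V c} [y v Gyv|t Y1 V1 c1 Y2 V2 c2 t0 t1 _ IH1 _ IH2].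
  exact: mono_hull_graph_pair_le.
rewrite (ipDr hip) !(ipZr hip) (ipDl hip) !(ipZl hip).
have t1' : 0 <= 1 - t by rewrite subr_ge0.
have := ler_wpM2l t1' IH1; have := ler_wpM2l t0 IH2; rewrite !mulrDr; lra.
Qed.

Definition hull_defect (Y V : H) (c : R) := - `|Y - V| ^+ 2 / 4 - c.

(* [c >= <Y, V>] by [mono_hull_pair_le], and [|Y - V|^2 / 4 + <Y, V> = |Y + V|^2 / 4]. *)
Lemma hull_defect_le0 Y V c : mono_hull Y V c -> hull_defect Y V c <= 0.
Proof.
move=> h; have := mono_hull_pair_le h h.
have : 0 <= ip (Y + V) (Y + V) by rewrite (ipxx hip) sqr_ge0.
rewrite /hull_defect -(ipxx hip) (ipBl hip) !(ipBr hip) (ipDl hip) !(ipDr hip) (ipC hip V Y).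
lra.
Qed.

Lemma hull_defect_mix t Y1 V1 c1 Y2 V2 c2 :
  hull_defect ((1 - t) *: Y1 + t *: Y2) ((1 - t) *: V1 + t *: V2) ((1 - t) * c1 + t * c2)
  = (1 - t) * hull_defect Y1 V1 c1 + t * hull_defect Y2 V2 c2
    + t * (1 - t) / 4 * `|(Y1 - V1) - (Y2 - V2)| ^+ 2.
Proof.
rewrite /hull_defect -!(ipxx hip).
have -> : (1 - t) *: Y1 + t *: Y2 - ((1 - t) *: V1 + t *: V2)
          = (1 - t) *: (Y1 - V1) + t *: (Y2 - V2).
  by rewrite !scalerBr opprD addrACA.
move: (Y1 - V1) (Y2 - V2) => s1 s2.
rewrite (ipBl hip) !(ipBr hip) (ipDl hip) !(ipDr hip) !(ipZl hip) !(ipZr hip) (ipC hip s2 s1).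
by field.
Qed.

End MonotoneHull.

Lemma le0_of_le_mul_unit {R : realFieldType} (E K : R) : 0 <= K ->
  (forall t, 0 < t -> t <= 1 -> E <= t * K) -> E <= 0.
Proof.
move=> K0 h; rewrite leNgt; apply/negP => E0.
have hKE : 0 < K + E by lra.
have t0 : 0 < E / (K + E) by rewrite divr_gt0.
have t1 : E / (K + E) <= 1 by rewrite ler_pdivrMr // mul1r; lra.
have := h _ t0 t1; rewrite mulrAC ler_pdivlMr // mulrDr => h2.
have : E * E <= 0 by lra.
by rewrite leNgt mulr_gt0.
Qed.

Section MonotoneRelatedPoint.
Context {R : realType} {H : completeNormedModType R} {ip : H -> H -> R}.
Hypothesis hip : inner_product ip.
Variable G : H -> H -> Prop.
Hypothesis Gmono : forall y v y' v', G y v -> G y' v' -> 0 <= ip (v - v') (y - y').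
Hypothesis Gne : exists y v, G y v.

Local Notation hull := (@mono_hull _ _ ip G).

Let defects := [set r | exists Y V c, hull Y V c /\ r = hull_defect Y V c].
Let sigma := sup defects.

Lemma defects_has_sup : has_sup defects.
Proof.
split; last by exists 0 => _ [Y [V [c [hc ->]]]]; exact: hull_defect_le0 hc.
have [y [v Gyv]] := Gne.
by exists (hull_defect y v (ip y v)), y, v, (ip y v); split => //; exact: mono_hull_graph.
Qed.

Lemma hull_defect_le_sup Y V c : hull Y V c -> hull_defect Y V c <= sigma.
Proof. by move=> hc; apply: sup_ubound; [exact: defects_has_sup.2 | exists Y, V, c]. Qed.

Lemma sup_defects_le0 : sigma <= 0.
Proof.
apply: ge_sup; first exact: defects_has_sup.1.
by move=> _ [Y [V [c [hc ->]]]]; exact: hull_defect_le0 hc.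
Qed.

Lemma exists_maximizing_hull_seq : exists (Y V : nat -> H) (c : nat -> R),
  forall n, hull (Y n) (V n) (c n) /\ sigma - n.+1%:R^-1 < hull_defect (Y n) (V n) (c n).
Proof.
have near_sup n : exists p : H * H * R,
    hull p.1.1 p.1.2 p.2 /\ sigma - n.+1%:R^-1 < hull_defect p.1.1 p.1.2 p.2.
  have e0 : 0 < n.+1%:R^-1 :> R by rewrite invr_gt0.
  have [_ [Y [V [c [hc ->]]]] he] := sup_adherent e0 defects_has_sup.
  by exists (Y, V, c).
have [P HP] := choice near_sup.
by exists (fun n => (P n).1.1), (fun n => (P n).1.2), (fun n => (P n).2).
Qed.

Section MaximizingSequence.
Variables (Y V : nat -> H) (c : nat -> R).
Hypothesis hullYVc : forall n, hull (Y n) (V n) (c n).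
Hypothesis defect_near_sup :
  forall n, sigma - n.+1%:R^-1 < hull_defect (Y n) (V n) (c n).

Lemma maximizing_diff_sqr_le n m :
  `|(Y n - V n) - (Y m - V m)| ^+ 2 <= 8 * (n.+1%:R^-1 + m.+1%:R^-1).
Proof.
have h20 : 0 <= 2^-1 :> R by rewrite invr_ge0.
have h21 : 2^-1 <= 1 :> R by rewrite invf_le1 // ler1n.
have := hull_defect_le_sup (mono_hull_mix h20 h21 (hullYVc n) (hullYVc m)).
rewrite (hull_defect_mix hip); have := defect_near_sup n; have := defect_near_sup m.
move: (n.+1%:R^-1 : R) (m.+1%:R^-1 : R) => a b; lra.
Qed.

Lemma maximizing_diff_cvg : cvg ((fun n => Y n - V n) @ \oo).
Proof.
apply/cauchy_cvgP/cauchy_exP => e e0.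
have e16 : 0 < e ^+ 2 / 16 by rewrite divr_gt0 // exprn_gt0.
have [N _ hN] := (cvgrPdist_lt _ _).1 (@cvg_harmonic R) _ e16.
exists (Y N - V N); exists N => // n /= Nn.
rewrite -ball_normE /ball_ /=.
have hNN := hN N (leqnn N); have h1 := maximizing_diff_sqr_le N n.
have hnN : n.+1%:R^-1 <= N.+1%:R^-1 :> R.
  by rewrite lef_pV2 ?posrE ?ltr0Sn // ler_nat ltnS.
rewrite /= sub0r normrN ger0_norm ?invr_ge0 // in hNN.
rewrite -(@ltr_pXn2r _ 2) // ?nnegrE ?normr_ge0 ?ltW //.
move: h1 hNN hnN; move: (n.+1%:R^-1 : R) (N.+1%:R^-1 : R) => a b; lra.
Qed.

Lemma maximizing_defect_cvg :
  (fun n => hull_defect (Y n) (V n) (c n)) @ \oo --> sigma.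
Proof.
have lo : (fun n => sigma - harmonic n) @ \oo --> sigma.
  by have := cvgB (cvg_cst sigma) (@cvg_harmonic R); rewrite subr0; apply.
apply: (squeeze_cvgr _ lo (cvg_cst sigma)); near=> n.
by rewrite hull_defect_le_sup // ltW // defect_near_sup.
Unshelve. all: end_near.
Qed.

Lemma graph_defect_le_sup l : (fun n => Y n - V n) @ \oo --> l ->
  forall y v, G y v -> hull_defect y v (ip y v) + `|l - (y - v)| ^+ 2 / 4 <= sigma.
Proof.
move=> sl y v Gyv; set fj := hull_defect y v (ip y v); set Q := `|l - (y - v)| ^+ 2.
have Q0 : 0 <= Q / 4 by rewrite divr_ge0 ?sqr_ge0.
have mix t : 0 < t -> t <= 1 -> fj + Q / 4 - sigma <= t * (Q / 4).
  move=> t0 t1.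
  have Qcvg : (fun n => `|(Y n - V n) - (y - v)| ^+ 2) @ \oo --> Q.
    by rewrite /Q expr2; under eq_fun do rewrite expr2;
      apply: cvgM; apply: cvg_norm; exact: cvgB sl (cvg_cst _).
  have mix_cvg : (fun n => (1 - t) * hull_defect (Y n) (V n) (c n) + t * fj
      + t * (1 - t) / 4 * `|(Y n - V n) - (y - v)| ^+ 2) @ \oo
      --> (1 - t) * sigma + t * fj + t * (1 - t) / 4 * Q.
    apply: cvgD; last exact: cvgM (cvg_cst _) Qcvg.
    by apply: cvgD; [exact: cvgM (cvg_cst _) maximizing_defect_cvg | exact: cvg_cst].
  have lim_le : (1 - t) * sigma + t * fj + t * (1 - t) / 4 * Q <= sigma.
    apply: (ler_cvg_to mix_cvg (cvg_cst sigma)); apply: nearW => n.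
    rewrite -(hull_defect_mix hip); apply: hull_defect_le_sup.
    exact: mono_hull_mix (ltW t0) t1 (hullYVc n) (mono_hull_graph Gyv).
  rewrite -(ler_pM2l t0) -subr_ge0.
  have -> : t * (t * (Q / 4)) - t * (fj + Q / 4 - sigma)
            = sigma - ((1 - t) * sigma + t * fj + t * (1 - t) / 4 * Q) by ring.
  by rewrite subr_ge0.
have := le0_of_le_mul_unit Q0 mix; lra.
Qed.

End MaximizingSequence.

Lemma exists_monotone_related_opp :
  exists x, forall y v, G y v -> 0 <= ip (- x - v) (x - y).
Proof.
have [Y [V [c hYVc]]] := exists_maximizing_hull_seq.
have hull_n n := (hYVc n).1; have near_n n := (hYVc n).2.
have /cvg_ex[l sl] := maximizing_diff_cvg hull_n near_n.
exists (2^-1 *: l) => y v Gyv.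
have := graph_defect_le_sup hull_n near_n sl Gyv.
have := sup_defects_le0.
have -> : ip (- (2^-1 *: l) - v) (2^-1 *: l - y)
          = - (hull_defect y v (ip y v) + `|l - (y - v)| ^+ 2 / 4).
  rewrite /hull_defect -!(ipxx hip).
  rewrite !(ipDl hip, ipBl hip, ipDr hip, ipBr hip, ipZl hip, ipZr hip, ipNl hip, ipNr hip).
  rewrite (ipC hip y l) (ipC hip v l) (ipC hip v y).
  by field.
lra.
Qed.

End MonotoneRelatedPoint.

Lemma resolventP {R : realType} {H : completeNormedModType R} (ip : H -> H -> R)
    (A : H -> set H) (lam : R) (w : H) :
  inner_product ip -> maximal_monotone ip A -> zeros A !=set0 -> 0 < lam ->
  A (resolvent A lam w) (lam^-1 *: (w - resolvent A lam w)).
Proof.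
move=> hip [Amono Amax] [z Az] lam0.
apply: (@xgetPex _ w [set y | A y (lam^-1 *: (w - y))]).
pose G y v := exists2 u, A y u & v = lam *: u - w.
have Gmono y v y' v' : G y v -> G y' v' -> 0 <= ip (v - v') (y - y').
  move=> [u Ayu ->] [u' Ayu' ->].
  have -> : lam *: u - w - (lam *: u' - w) = lam *: (u - u').
    by rewrite scalerBr opprB addrA subrK.
  by rewrite (ipZl hip); apply: mulr_ge0; [exact: ltW | exact: Amono].
have Gne : exists y v, G y v by exists z, (lam *: 0 - w), 0.
have [x hx] := exists_monotone_related_opp hip Gmono Gne.
exists x => /=.
pose u0 := lam^-1 *: (w - x).
have related y u : A y u -> 0 <= ip (u - u0) (y - x).
  move=> Ayu; have := hx y (lam *: u - w) (ex_intro2 _ _ u Ayu erefl).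
  have -> : ip (- x - (lam *: u - w)) (x - y) = lam * ip (u - u0) (y - x).
    rewrite /u0.
    rewrite !(ipDl hip, ipBl hip, ipDr hip, ipBr hip, ipZl hip, ipZr hip, ipNl hip, ipNr hip).
    by field; rewrite gt_eqF.
  by rewrite pmulr_rge0.
pose B y v := A y v \/ (y = x /\ v = u0).
have Bmono : monotone_op ip B.
  move=> y1 y2 u1 u2 [h1|[-> ->]] [h2|[-> ->]].
  - exact: Amono.
  - exact: related.
  - by rewrite -(opprB u2) -(opprB y2) (ipNl hip) (ipNr hip) opprK related.
  - by rewrite subrr (ip0l hip).
by rewrite -(Amax B Bmono (fun y v h => or_introl h)); right.
Qed.

Section SquaredDistanceDerivative.
Context {R : realType} {H : normedModType R} {ip : H -> H -> R}.
Hypothesis hip : inner_product ip.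

Lemma is_derive_sqr_normB (x : R -> H) (z : H) (t : R) : derivable x t 1 ->
  is_derive t 1 (fun s => `|x s - z| ^+ 2) (2 * ip ('D_1 x t) (x t - z)).
Proof.
move=> dx.
have shift_cvg : (fun h : R => h *: 1 + t) @ 0^' --> t.
  rewrite -[X in _ --> X]add0r; apply: cvgD; last exact: cvg_cst.
  rewrite -[X in _ --> X](scale0r (1 : R)); apply: cvgZl; exact: cvg_within.
have x_cvg : (fun h : R => x (h *: 1 + t)) @ 0^' --> x t.
  apply: cvg_comp shift_cvg _.
  exact: differentiable_continuous ((derivable1_diffP x t).1 dx).
pose sqr_quot h := h^-1 *: (`|x (h *: 1 + t) - z| ^+ 2 - `|x t - z| ^+ 2).
have quotE : sqr_quot = (fun h : R =>
    ip (h^-1 *: (x (h *: 1 + t) - x t)) ((x (h *: 1 + t) - z) + (x t - z))).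
  apply/funext => h; rewrite /sqr_quot -!(ipxx hip).
  have -> : x (h *: 1 + t) - x t = (x (h *: 1 + t) - z) - (x t - z).
    by rewrite opprB addrA subrK.
  move: (x (h *: 1 + t) - z) (x t - z) => a b.
  rewrite (ipZl hip) (ipBl hip) !(ipDr hip) (ipC hip b a) /GRing.scale /=; ring.
have quot_cvg : sqr_quot @ 0^' --> 2 * ip ('D_1 x t) (x t - z).
  rewrite quotE mulr_natl mulr2n -(ipDr hip).
  have diff_quot : (fun h : R => h^-1 *: (x (h *: 1 + t) - x t)) @ 0^' --> 'D_1 x t := dx.
  apply: (ip_cvg hip diff_quot); apply: cvgD; last exact: cvg_cst.
  exact: cvgB x_cvg (cvg_cst _).
apply: DeriveDef; first by apply/cvg_ex; exists (2 * ip ('D_1 x t) (x t - z)).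
exact: cvg_lim.
Qed.

Lemma sqr_normB_decrease (x : R -> H) (z : H) (m t s : R) :
  t <= s ->
  (forall u, t <= u -> u <= s -> derivable x u 1) ->
  (forall u, t < u -> u < s -> ip ('D_1 x u) (x u - z) + m <= 0) ->
  `|x s - z| ^+ 2 + 2 * m * (s - t) <= `|x t - z| ^+ 2.
Proof.
move=> ts dx hd.
pose psi := (fun u => `|x u - z| ^+ 2) + (2 * m) \*: @id R.
have dpsi u : t <= u -> u <= s ->
    is_derive u 1 psi (2 * ip ('D_1 x u) (x u - z) + (2 * m) *: 1).
  by move=> tu us; apply: is_deriveD; exact: is_derive_sqr_normB (dx _ tu us).
have in_ts u : u \in `]t, s[ -> t < u < s by rewrite in_itv.
have : psi s <= psi t.
  apply: (@ler0_derive1_le_cc R psi t s); rewrite ?in_itv /= ?lexx ?ts //.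
  - by move=> u /in_ts /andP[tu us]; case: (dpsi _ (ltW tu) (ltW us)).
  - move=> u /in_ts /andP[tu us].
    rewrite derive1E (@derive_val _ _ _ _ _ _ _ (dpsi _ (ltW tu) (ltW us))).
    by have := hd _ tu us; rewrite /GRing.scale /= mulr1; lra.
  - apply: derivable_within_continuous => u; rewrite in_itv /= => /andP[tu us].
    by case: (dpsi _ tu us).
have psiE u : psi u = `|x u - z| ^+ 2 + 2 * m * u by [].
rewrite !psiE mulrBr; lra.
Qed.

End SquaredDistanceDerivative.

Section Distance.
Context {R : realType} {H : normedModType R}.
Implicit Types (S : set H) (x y z : H).

Lemma dist_image_neq0 x S : S !=set0 -> [set `|x - z| | z in S] !=set0.
Proof. by case=> z Sz; exists `|x - z|, z. Qed.

Lemma dist_ge0 x S : S !=set0 -> 0 <= dist x S.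
Proof. by move=> S0; apply: lb_le_inf; [exact: dist_image_neq0 | move=> _ [z _ <-]]. Qed.

Lemma dist_le x S z : S z -> dist x S <= `|x - z|.
Proof. by move=> Sz; apply: ge_inf; [exists 0 => _ [? _ <-] | exists z]. Qed.

Lemma dist_triangle x y S : S !=set0 -> dist x S <= `|x - y| + dist y S.
Proof.
move=> S0; rewrite -lerBlDl; apply: lb_le_inf; first exact: dist_image_neq0.
move=> _ [z Sz <-]; rewrite lerBlDl.
by apply: le_trans (dist_le x Sz) _; rewrite -(subrKA y) ler_normD.
Qed.

Lemma le_dist_sqr x S (a : R) : S !=set0 ->
  (forall z, S z -> a <= `|x - z| ^+ 2) -> a <= dist x S ^+ 2.
Proof.
move=> S0 h; have [a_le0|a_gt0] := leP a 0; first exact: le_trans a_le0 (sqr_ge0 _).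
have sqrt_le : Num.sqrt a <= dist x S.
  apply: lb_le_inf; first exact: dist_image_neq0.
  move=> _ [z Sz <-]; rewrite -(@ler_pXn2r _ 2) ?nnegrE ?sqrtr_ge0 //.
  by rewrite sqr_sqrtr ?h // ltW.
by rewrite -(sqr_sqrtr (ltW a_gt0)) lerXn2r ?nnegrE ?sqrtr_ge0 ?dist_ge0.
Qed.

End Distance.

Section ErrorBound.
Context {R : realType} {H : normedModType R} (A : H -> set H) (delta kappa : R).
Hypothesis Z0 : zeros A !=set0.
Hypothesis kappa_ge0 : 0 <= kappa.
Hypothesis error_bound : forall y, A y !=set0 -> dist 0 (A y) <= delta ->
  dist y (zeros A) <= kappa * dist 0 (A y).

Lemma dist_zeros_le_graph u y w : A y w -> `|w| <= delta ->
  dist u (zeros A) <= `|u - y| + kappa * `|w|.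
Proof.
move=> Ayw w_le; apply: le_trans (dist_triangle u y Z0) _; rewrite lerD2l.
have dist0_le : dist 0 (A y) <= `|w| by rewrite -normrN -sub0r dist_le.
apply: le_trans (error_bound (ex_intro _ w Ayw) (le_trans dist0_le w_le)) _.
by rewrite ler_wpM2l.
Qed.

End ErrorBound.

Lemma exprn_pred_le1D {R : realFieldType} (a r : R) (p : nat) :
  0 <= a -> 0 <= r -> r ^+ p <= a -> r ^+ p.-1 <= 1 + a.
Proof.
move=> a0 r0 hrp; have [r1|r1] := leP r 1.
  by apply: le_trans (exprn_ile1 _ r0 r1) _; rewrite lerDl.
apply: le_trans (_ : r ^+ p <= _); last by apply: le_trans hrp _; rewrite lerDr.
by rewrite ler_eXn2l // leq_pred.
Qed.

Lemma divD1_le_of_lt_exprn {R : realFieldType} (a r : R) (p : nat) :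
  0 <= a -> 0 <= r -> (0 < p)%N -> a < r ^+ p -> a / (1 + a) <= r.
Proof.
move=> a0 r0 p0 hrp; have a1 : 0 < 1 + a by lra.
have [r1|r1] := leP 1 r.
  by apply: le_trans r1; rewrite ler_pdivrMr // mul1r lerDr.
have rp_le : r ^+ p <= r by rewrite -(prednK p0) exprS ler_piMr // exprn_ile1 // ltW.
apply: le_trans (ltW (lt_le_trans hrp rp_le)).
by rewrite ler_pdivrMr // ler_peMr // lerDl.
Qed.

Lemma exp_decay_of_unit_step {R : realType} (g : R -> R) (q c : R) :
  0 <= c -> expR c <= q ->
  (forall t, 1 <= t -> 0 <= g t) ->
  (forall t s, 1 <= t -> t <= s -> g s <= g t) ->
  (forall t, 1 <= t -> g (t + 1) * q <= g t) ->
  forall t, 1 <= t -> g t <= g 1 * expR (2 * c) * expR (- (c * t)).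
Proof.
move=> c0 ec_le g0 g_nonincr step.
have geometric n : g (1 + n%:R) <= expR (- (c * n%:R)) * g 1.
  elim: n => [|n IH]; first by rewrite addr0 mulr0 oppr0 expR0 mul1r.
  have n1 : 1 <= 1 + n%:R :> R by rewrite lerDl.
  have g_next : g (1 + n%:R + 1) <= expR (- c) * g (1 + n%:R).
    rewrite expRN mulrC ler_pdivlMr ?expR_gt0 //.
    apply: le_trans (step _ n1); rewrite ler_wpM2l ?g0 //.
    by apply: le_trans n1 _; rewrite lerDl.
  rewrite -natr1 addrA mulrDr mulr1 opprD expRD (mulrC (expR _)) -mulrA.
  exact: le_trans g_next (ler_wpM2l (expR_ge0 _) IH).
move=> t t1; have t10 : 0 <= t - 1 by lra.
have /andP[n_le n_gt] := truncn_itv t10; move: (Num.truncn (t - 1)) n_le n_gt => n n_le n_gt.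
have n1 : 1 <= 1 + n%:R :> R by rewrite lerDl.
have n_t : 1 + n%:R <= t by lra.
apply: le_trans (g_nonincr _ _ n1 n_t) _.
apply: le_trans (geometric n) _; rewrite mulrC -mulrA -expRD ler_wpM2l ?g0 // ler_expR.
have : c * (t - 2) <= c * n%:R.
  by rewrite ler_wpM2l //; move: n_gt; rewrite -natr1; lra.
lra.
Qed.

Section Trajectory.
Context {R : realType} {H : completeNormedModType R} {ip : H -> H -> R} {A : H -> set H}.
Hypotheses (hip : inner_product ip) (Amax : maximal_monotone ip A) (Z0 : zeros A !=set0).
Variables (x : R -> H) (lam : R -> R).
Hypothesis lam_gt0 : forall t, 0 <= t -> 0 < lam t.
Hypothesis x_derivable : forall t, 0 < t -> derivable x t 1.
Hypothesis x_ode : forall t, 0 < t -> 'D_1 x t + x t - resolvent A (lam t) (x t) = 0.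

Local Notation J t := (resolvent A (lam t) (x t)).
Local Notation d t := (dist (x t) (zeros A)).

Lemma traj_resolventP t : 0 <= t -> A (J t) ((lam t)^-1 *: (x t - J t)).
Proof. by move=> t0; exact: resolventP hip Amax Z0 (lam_gt0 t0). Qed.

Lemma traj_derive t : 0 < t -> 'D_1 x t = J t - x t.
Proof. by move=> t0; apply/eqP; rewrite -subr_eq0 opprB addrA x_ode. Qed.

Lemma traj_fejer z u : zeros A z -> 0 < u ->
  ip ('D_1 x u) (x u - z) + `|J u - x u| ^+ 2 <= 0.
Proof.
move=> Zz u0; rewrite traj_derive //.
have := Amax.1 _ _ _ _ (traj_resolventP (ltW u0)) Zz.
rewrite subr0 (ipZl hip) pmulr_rge0; last by rewrite invr_gt0 lam_gt0 // ltW.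
have -> : x u - z = - (J u - x u) + (J u - z) by rewrite opprB addrA subrK.
rewrite -(opprB (J u) (x u)); move: (J u - x u) (J u - z) => a b.
rewrite (ipNl hip) (ipDr hip) (ipNr hip) (ipxx hip); lra.
Qed.

Lemma traj_dist_sqr_decrease t s m : 0 < t -> t <= s ->
  (forall u, t < u -> u < s -> m <= `|J u - x u| ^+ 2) ->
  d s ^+ 2 + 2 * m * (s - t) <= d t ^+ 2.
Proof.
move=> t0 ts hm; apply: le_dist_sqr => // z Zz.
have := sqr_normB_decrease hip ts
  (fun u tu _ => x_derivable (lt_le_trans t0 tu))
  (fun u tu us => le_trans (lerD (lexx _) (hm u tu us)) (traj_fejer Zz (lt_trans t0 tu))).
have ds_le : d s <= `|x s - z| := dist_le (x s) Zz.
have : d s ^+ 2 <= `|x s - z| ^+ 2 by rewrite lerXn2r ?nnegrE ?dist_ge0.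
lra.
Qed.

Lemma traj_dist_nonincreasing t s : 0 < t -> t <= s -> d s <= d t.
Proof.
move=> t0 ts; have := traj_dist_sqr_decrease t0 ts (fun u _ _ => sqr_ge0 _).
by rewrite mulr0 mul0r addr0 ler_pXn2r ?nnegrE ?dist_ge0.
Qed.

Section ErrorBoundRate.
Variables (theta : R) (p : nat) (delta kappa : R).
Hypotheses (theta_gt0 : 0 < theta) (p_gt0 : (0 < p)%N).
Hypotheses (delta_gt0 : 0 < delta) (kappa_gt0 : 0 < kappa).
Hypothesis lam_residual : forall t, 0 <= t -> lam t * `|J t - x t| ^+ p.-1 = theta.
Hypothesis error_bound : forall y, A y !=set0 -> dist 0 (A y) <= delta ->
  dist y (zeros A) <= kappa * dist 0 (A y).

Lemma traj_dist_le_small_residual u : 0 <= u -> `|J u - x u| ^+ p <= theta * delta ->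
  d u <= (1 + kappa * (1 + theta * delta) / theta) * `|J u - x u|.
Proof.
move=> u0 small; set r := `|J u - x u|.
have r0 : 0 <= r by exact: normr_ge0.
set w := (lam u)^-1 *: (x u - J u).
have w_norm : `|w| * theta = r * r ^+ p.-1.
  rewrite normrZ ger0_norm ?invr_ge0 ?ltW ?lam_gt0 // distrC -(lam_residual u0) -/r.
  by field; rewrite gt_eqF ?lam_gt0.
have rp : r ^+ p = r * r ^+ p.-1 by rewrite -exprS prednK.
have w_le_delta : `|w| <= delta by rewrite -(ler_pM2r theta_gt0) w_norm -rp mulrC.
have w_le_r : `|w| <= (1 + theta * delta) * r / theta.
  rewrite ler_pdivlMr // w_norm mulrC ler_wpM2r //.
  exact: exprn_pred_le1D (ltW (mulr_gt0 theta_gt0 delta_gt0)) r0 small.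
have := dist_zeros_le_graph Z0 (ltW kappa_gt0) error_bound (x u)
  (traj_resolventP u0) w_le_delta.
rewrite distrC -/r -/w => d_le.
apply: le_trans d_le _; rewrite mulrDl mul1r lerD2l.
have -> : kappa * (1 + theta * delta) / theta * r = kappa * ((1 + theta * delta) * r / theta).
  by ring.
by rewrite ler_wpM2l // ltW.
Qed.

Lemma traj_dist_sqr_le_residual :
  exists2 K, 0 < K & forall u, 1 <= u -> d u ^+ 2 <= K * `|J u - x u| ^+ 2.
Proof.
pose K1 := 1 + kappa * (1 + theta * delta) / theta.
pose m0 := theta * delta / (1 + theta * delta).
have thd0 : 0 < theta * delta by rewrite mulr_gt0.
have m0_gt0 : 0 < m0 by rewrite divr_gt0 // addr_gt0.
have K1_gt0 : 0 < K1 by rewrite addr_gt0 // !divr_gt0 ?mulr_gt0 // addr_gt0.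
(* Small residuals are handled by the error bound; a large residual is at least [m0],
   while [d u <= d 1]. *)
exists (K1 ^+ 2 + d 1 ^+ 2 / m0 ^+ 2).
  by rewrite ltr_pwDl ?exprn_gt0 // divr_ge0 ?sqr_ge0.
move=> u u1; have u0 : 0 < u by exact: lt_le_trans ltr01 u1.
set r := `|J u - x u|; have r0 : 0 <= r by exact: normr_ge0.
have [small|large] := leP (r ^+ p) (theta * delta).
  have d_le := traj_dist_le_small_residual (ltW u0) small.
  have K1r0 : 0 <= K1 * r by rewrite mulr_ge0 // ltW.
  apply: le_trans (_ : (K1 * r) ^+ 2 <= _); first by rewrite lerXn2r ?nnegrE ?dist_ge0.
  by rewrite exprMn mulrDl lerDl mulr_ge0 ?divr_ge0 ?sqr_ge0.
have m0_le : m0 <= r := divD1_le_of_lt_exprn (ltW thd0) r0 p_gt0 large.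
have d_le : d u ^+ 2 <= d 1 ^+ 2.
  by rewrite lerXn2r ?nnegrE ?dist_ge0 // traj_dist_nonincreasing.
apply: le_trans d_le _; rewrite mulrDl -[X in X <= _](divfK (expf_neq0 2 (lt0r_neq0 m0_gt0))).
apply: ler_wpDl; first by rewrite mulr_ge0 ?sqr_ge0.
rewrite ler_wpM2l ?divr_ge0 ?sqr_ge0 //.
by rewrite lerXn2r ?nnegrE // ltW.
Qed.

Lemma traj_dist_sqr_contract :
  exists2 q, 1 < q & forall t, 1 <= t -> d (t + 1) ^+ 2 * q <= d t ^+ 2.
Proof.
have [K K_gt0 d_le] := traj_dist_sqr_le_residual.
exists (1 + 2 / K); first by rewrite ltrDl divr_gt0.
move=> t t1; have t0 : 0 < t by exact: lt_le_trans ltr01 t1.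
have tt1 : t <= t + 1 by rewrite lerDl.
have := traj_dist_sqr_decrease t0 tt1 (m := d (t + 1) ^+ 2 / K).
rewrite addrAC subrr add0r mulr1 mulrDr mulr1 mulrCA; apply => u tu ut1.
have u1 : 1 <= u by apply: le_trans t1 (ltW tu).
rewrite ler_pdivrMr // mulrC; apply: le_trans (d_le u u1).
by rewrite lerXn2r ?nnegrE ?dist_ge0 // traj_dist_nonincreasing ?(lt_trans t0) ?ltW.
Qed.

Lemma traj_dist_exp_decay : exists2 c0, 0 < c0 & forall c, 0 <= c -> c <= c0 ->
  exists M, forall t, 1 <= t -> d t <= M * expR (- (c * t) / 2).
Proof.
have [q q_gt1 contract] := traj_dist_sqr_contract.
exists (ln q); first exact: ln_gt0.
move=> c c0 c_le; exists (d 1 * expR c) => t t1.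
have ec_le : expR c <= q by rewrite -[q]lnK ?posrE ?(lt_trans ltr01) // ler_expR.
have d_nonincr u s : 1 <= u -> u <= s -> d s ^+ 2 <= d u ^+ 2.
  move=> u1 us; have u0 : 0 < u by exact: lt_le_trans ltr01 u1.
  by rewrite lerXn2r ?nnegrE ?dist_ge0 // traj_dist_nonincreasing.
have := exp_decay_of_unit_step (g := fun t => d t ^+ 2) c0 ec_le
  (fun t _ => sqr_ge0 (d t)) d_nonincr contract t1.
have M0 : 0 <= d 1 * expR c * expR (- (c * t) / 2).
  by rewrite !mulr_ge0 ?expR_ge0 ?dist_ge0.
move=> decay; rewrite -(@ler_pXn2r _ 2) ?nnegrE ?dist_ge0 //.
apply: le_trans decay _; rewrite !exprMn -!expRM_natl.
by have -> : 2%:R * (- (c * t) / 2) = - (c * t) by field.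
Qed.

End ErrorBoundRate.

End Trajectory.

Unset Implicit Arguments. Set Strict Implicit. Set Printing Implicit Defensive.

Theorem theorem3p4 (R : realType) (H : completeNormedModType R)
  (ip : H -> H -> R) (A : H -> set H) (theta : R) (p : nat)
  (x : R -> H) (lam : R -> R) :
  inner_product ip ->
  maximal_monotone ip A ->
  zeros A !=set0 ->
  0 < theta -> (1 <= p)%N ->
  (* global solution on [0, +oo) *)
  (forall t, 0 <= t -> 0 < lam t) ->
  {within `[0, +oo[, continuous x} ->
  (forall t, 0 < t -> derivable x t 1) ->
  (forall t, 0 < t -> 'D_1 x t + x t - resolvent A (lam t) (x t) = 0) ->
  (forall t, 0 <= t ->
     lam t * `|resolvent A (lam t) (x t) - x t| ^+ p.-1 = theta) ->
  ~ A (x 0) 0 ->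
  (* error bound condition, with constants delta and kappa *)
  forall delta kappa : R, 0 < delta -> 0 < kappa ->
  (forall y : H, A y !=set0 -> dist 0 (A y) <= delta ->
     dist y (zeros A) <= kappa * dist 0 (A y)) ->
  exists t0 c : R, [/\ 0 < t0, 0 < c,
    c <= 2 * (1 + kappa / lam 0) ^- 2 &
    exists M : R, forall t, t0 < t ->
      dist (x t) (zeros A) <= M * expR (- (c * t) / 2)].
Proof.
move=> hip Amax Z0 theta_gt0 p_gt0 lam_gt0 _ x_der x_ode lam_res _ delta kappa
  delta_gt0 kappa_gt0 error_bound.
have [c0 c0_gt0 decay] := traj_dist_exp_decay hip Amax Z0 lam_gt0 x_der x_ode
  theta_gt0 p_gt0 delta_gt0 kappa_gt0 lam_res error_bound.
pose c := Num.min c0 (2 * (1 + kappa / lam 0) ^- 2).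
have c_gt0 : 0 < c.
  by rewrite lt_min c0_gt0 mulr_gt0 // invr_gt0 exprn_gt0 // addr_gt0 // divr_gt0 // lam_gt0.
have c_le : c <= c0 by rewrite ge_min lexx.
have [M hM] := decay c (ltW c_gt0) c_le.
exists 2, c; split => //; first by rewrite ge_min lexx orbT.
by exists M => t t2; apply: hM; lra.
Qed.
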